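(* For every integer $n$, \[ p(n) + \sum_{j\geq 1} (-1)^j \Big( p(n-j^2) + p(n-2j^2) \Big) = \begin{cases} 0 & \text{if } n \text{ is odd},\\ qq(n) & \text{if } n \text{ is even}, \end{cases} \] that is, $p(n) - p(n-1) - p(n-2) + p(n-4) + p(n-8) - p(n-9) - p(n-18) + p(n-16) + \cdots$ equals $0$ for odd $n$ and $qq(n)$ for even $n$.
   Context: $p(n)$ denotes the number of partitions of the integer $n$ (with $p(0)=1$ and $p(n)=0$ for $n<0$). $qq(n)$ denotes the number of partitions of $n$ into distinct odd parts (with $qq(n)=0$ for $n<0$). *)

From mathcomp Require Import all_boot all_order all_algebra.
Set Implicit Arguments. Unset Strict Implicit. Unset Printing Implicit Defensive.
Import GRing.Theory Num.Theory.

(* A partition of n is encoded by its multiplicity function: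
   m i = number of parts equal to i.+1 (parts are 1..n, multiplicities <= n). *)
Definition npart (n : nat) : nat :=
  #|[set m : {ffun 'I_n -> 'I_n.+1} | (\sum_(i < n) i.+1 * m i)%N == n]|.

(* Partitions of n into distinct odd parts: m i = true iff i.+1 is a part. *)
Definition nqq (n : nat) : nat :=
  #|[set m : {ffun 'I_n -> bool} |
       [forall i, m i ==> odd i.+1] && ((\sum_(i < n) i.+1 * m i)%N == n)]|.

Definition p (n : int) : int :=
  match n with Posz k => (npart k)%:Z | Negz _ => 0%R end.
Definition qq (n : int) : int :=
  match n with Posz k => (nqq k)%:Z | Negz _ => 0%R end.

From mathcomp Require Import all_boot all_order all_algebra.
From mathcomp Require Import zify ring.

(* Generating functions, with every series truncated modulo X^(n+1) so that it
   is a polynomial.  With theta(q) = sum_(j in Z) (-1)^j q^(j^2) and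
   sum_n p(n) q^n = 1/(q;q)_oo, twice the left-hand side is the coefficient of
   q^n in (theta(q) + theta(q^2)) / (q;q)_oo.  Gauss' identity
   theta(q) = (q;q^2)_oo (q;q)_oo, the limit of a finite q-binomial identity,
   gives theta(q) / (q;q)_oo = (q;q^2)_oo and
   theta(q^2) / (q;q)_oo = (q^2;q^4)_oo (q^2;q^2)_oo / (q;q)_oo = (-q;q^2)_oo.
   The latter generates qq, the former is the same series at -q, so the two
   coefficients are (-1)^n qq(n) and qq(n), and the left-hand side is half
   their sum. *)

Set Implicit Arguments. Unset Strict Implicit. Unset Printing Implicit Defensive.
Import GRing.Theory Num.Theory.
Local Open Scope ring_scope.

#[warning="-postfix-notation-not-level-1"]
Reserved Notation "a = b %[modX N ]" (at level 70, b at next level,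
  format "'[hv ' a '/'  =  b '/'  %[modX  N ] ']'").

Definition eqmodX (R : nzRingType) (N : nat) (a b : {poly R}) :=
  exists c, a - b = 'X^N * c.
Notation "a = b %[modX N ]" := (eqmodX N a b) : ring_scope.

Section CongruenceModXn.
Variable R : comNzRingType.
Implicit Types (a b c d e u x : {poly R}) (N : nat).

Lemma eqmodX_refl N a : a = a %[modX N].
Proof. by exists 0; rewrite subrr mulr0. Qed.

Lemma eqmodX_sym N a b : a = b %[modX N] -> b = a %[modX N].
Proof. by case=> c h; exists (- c); rewrite mulrN -h opprB. Qed.

Lemma eqmodX_trans N a b c :
  a = b %[modX N] -> b = c %[modX N] -> a = c %[modX N].
Proof. by case=> u hu [v hv]; exists (u + v); rewrite mulrDr -hu -hv addrA subrK. Qed.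

Lemma eqmodXD N a b c d :
  a = b %[modX N] -> c = d %[modX N] -> a + c = b + d %[modX N].
Proof. by case=> u hu [v hv]; exists (u + v); rewrite mulrDr -hu -hv; ring. Qed.

Lemma eqmodXN N a b : a = b %[modX N] -> - a = - b %[modX N].
Proof. by case=> u hu; exists (- u); rewrite mulrN -hu; ring. Qed.

Lemma eqmodXM N a b c d :
  a = b %[modX N] -> c = d %[modX N] -> a * c = b * d %[modX N].
Proof.
case=> u hu [v hv]; exists (u * c + b * v).
by rewrite mulrDr mulrA -hu mulrCA -hv; ring.
Qed.

Lemma eqmodX_sum N I (r : seq I) (P : pred I) (F G : I -> {poly R}) :
  (forall i, P i -> F i = G i %[modX N]) ->
  \sum_(i <- r | P i) F i = \sum_(i <- r | P i) G i %[modX N].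
Proof. by move=> FG; apply: big_ind2 => // *; [apply: eqmodX_refl | apply: eqmodXD]. Qed.

Lemma eqmodX_prod N I (r : seq I) (P : pred I) (F G : I -> {poly R}) :
  (forall i, P i -> F i = G i %[modX N]) ->
  \prod_(i <- r | P i) F i = \prod_(i <- r | P i) G i %[modX N].
Proof. by move=> FG; apply: big_ind2 => // *; [apply: eqmodX_refl | apply: eqmodXM]. Qed.

Lemma eqmodX_prod1 N I (r : seq I) (P : pred I) (F : I -> {poly R}) :
  (forall i, P i -> F i = 1 %[modX N]) -> \prod_(i <- r | P i) F i = 1 %[modX N].
Proof. by move=> F1; have := @eqmodX_prod N I r P F (fun=> 1) F1; rewrite big1_eq. Qed.

Lemma eqmodX_prod_trunc N M k (F : nat -> {poly R}) : (M <= k)%N ->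
  (forall i, (M <= i < k)%N -> F i = 1 %[modX N]) ->
  \prod_(i < k) F i = \prod_(i < M) F i %[modX N].
Proof.
move=> leMk F1; rewrite -!(big_mkord xpredT F) (big_cat_nat (leq0n M) leMk) /=.
rewrite -[X in _ = X %[modX N]]mulr1; apply: eqmodXM; first exact: eqmodX_refl.
by rewrite big_nat_cond; apply: eqmodX_prod1 => i /andP[/F1].
Qed.

Lemma eqmodX_le N M a b : (M <= N)%N -> a = b %[modX N] -> a = b %[modX M].
Proof. by move=> leMN [u hu]; exists ('X^(N - M) * u); rewrite hu mulrA -exprD subnKC. Qed.

Lemma coef_eqmodX N a b i : a = b %[modX N] -> (i < N)%N -> a`_i = b`_i.
Proof. by case=> u hu ltiN; apply/eqP; rewrite -subr_eq0 -coefB hu coefXnM ltiN. Qed.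

Lemma eqmodX_pow0 N x k : x = 0 %[modX 1] -> (N <= k)%N -> x ^+ k = 0 %[modX N].
Proof.
case=> y; rewrite !subr0 => -> leNk; exists ('X^(k - N) * y ^+ k).
by rewrite subr0 exprMn mulrA -exprD subnKC.
Qed.

Lemma eqmodX_mulIr N u e a b : u * e = 1 %[modX N] ->
  a * e = b * e %[modX N] -> a = b %[modX N].
Proof.
move=> ue1 ab; have cancel c : c * e * u = c %[modX N].
  by rewrite -mulrA [e * u]mulrC -[X in _ = X %[modX N]]mulr1; apply/eqmodXM/ue1/eqmodX_refl.
apply: eqmodX_trans (eqmodX_sym (cancel a)) (eqmodX_trans _ (cancel b)).
exact/eqmodXM/eqmodX_refl.
Qed.

Lemma polyX_eqmodX0 : ('X : {poly R}) = 0 %[modX 1].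
Proof. by exists 1; rewrite subr0 expr1 mulr1. Qed.

End CongruenceModXn.

Section GaussianBinomial.
Variables (R : comNzRingType) (x : R).

Fixpoint qbinom (m k : nat) : R :=
  match m, k with
  | _, 0 => 1
  | 0, _.+1 => 0
  | m'.+1, k'.+1 => qbinom m' k' + x ^+ k'.+1 * qbinom m' k'.+1
  end.

Definition qpoch (k : nat) : R := \prod_(i < k) (1 - x ^+ i.+1).

Definition qpoch_odd (k : nat) : R := \prod_(i < k) (1 - x ^+ (2 * i).+1).

Definition sqdist (i N : nat) : nat := (`|i - N| ^ 2)%N.

Definition theta (N : nat) : R :=
  1 + (\sum_(1 <= j < N.+1) (-1) ^+ j * x ^+ (j ^ 2)) *+ 2.

Lemma qbinom0 m : qbinom m 0 = 1. Proof. by case: m. Qed.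

Lemma qbinomSS m k : qbinom m.+1 k.+1 = qbinom m k + x ^+ k.+1 * qbinom m k.+1.
Proof. by []. Qed.

Lemma qbinom_small m k : (m < k)%N -> qbinom m k = 0.
Proof. by elim: m k => [|m IHm] [|k] //= ltmk; rewrite !IHm ?mulr0 ?addr0 // ltnW. Qed.

Lemma qpoch0 : qpoch 0 = 1.
Proof. by rewrite /qpoch big_ord0. Qed.

Lemma qpochS k : qpoch k.+1 = qpoch k * (1 - x ^+ k.+1).
Proof. by rewrite /qpoch big_ord_recr. Qed.

Lemma qbinomSS_rev m k : qbinom m.+1 k.+1 = x ^+ (m - k) * qbinom m k + qbinom m k.+1.
Proof.
elim: m k => [|m IHm] [|k].
- by rewrite /= mulr0 !addr0 subnn expr0 mulr1.
- by rewrite /= !mulr0 !addr0.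
- have := IHm 0; have := qbinomSS m 0; rewrite !qbinom0 !mulr1 => rec rec'.
  by rewrite qbinomSS qbinom0 {1}rec' rec !subn0 !expr1 exprS; ring.
rewrite qbinomSS [in LHS]IHm [in LHS]IHm (qbinomSS m k) (qbinomSS m k.+1) subSS.
case: (ltnP k m) => [ltkm | lemk].
  have -> : (m - k = (m - k.+1).+1)%N by lia.
  by rewrite !exprS; ring.
by rewrite !(@qbinom_small m k.+1) ?(@qbinom_small m k.+2) ?ltnS ?leqW //; ring.
Qed.

Lemma qpoch_odd0 : qpoch_odd 0 = 1.
Proof. by rewrite /qpoch_odd big_ord0. Qed.

Lemma qpoch_oddS k : qpoch_odd k.+1 = qpoch_odd k * (1 - x ^+ (2 * k).+1).
Proof. by rewrite /qpoch_odd big_ord_recr. Qed.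

Lemma qbinom_qpoch m k : (k <= m)%N -> qbinom m k * qpoch k * qpoch (m - k) = qpoch m.
Proof.
elim: m k => [|m IHm] [|k] lekm //; rewrite ?qbinom0 ?qpoch0 ?subn0 ?mul1r //.
rewrite subSS qbinomSS !mulrDl.
have pascal_l : qbinom m k * qpoch k.+1 * qpoch (m - k) = qpoch m * (1 - x ^+ k.+1).
  rewrite qpochS -(IHm k lekm); ring.
have pascal_r : x ^+ k.+1 * qbinom m k.+1 * qpoch k.+1 * qpoch (m - k) =
          qpoch m * (x ^+ k.+1 - x ^+ m.+1).
  case: (ltngtP k m) => [ltkm | gtkm | <-]; last 2 first.
  - lia.
  - by rewrite qbinom_small // mulr0 !mul0r subrr mulr0.
  have -> : (m - k = (m - k.+1).+1)%N by lia.
  have -> : x ^+ m.+1 = x ^+ k.+1 * x ^+ (m - k.+1).+1.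
    by rewrite -exprD; congr (_ ^+ _); lia.
  rewrite (qpochS (m - k.+1)) -(IHm k.+1 ltkm); ring.
by rewrite pascal_l pascal_r qpochS; ring.
Qed.

Lemma qbinom_sumS (g : nat -> R) m :
  \sum_(0 <= i < m.+2) g i * qbinom m.+1 i =
  \sum_(0 <= k < m.+1) (g k.+1 + g k * x ^+ k) * qbinom m k.
Proof.
under [RHS]eq_bigr do rewrite mulrDl.
rewrite big_split /=.
have -> : \sum_(0 <= k < m.+1) g k * x ^+ k * qbinom m k =
          \sum_(0 <= k < m.+2) g k * x ^+ k * qbinom m k.
  by rewrite [RHS]big_nat_recr //= qbinom_small // mulr0 addr0.
rewrite big_nat_recl // [X in _ = _ + X]big_nat_recl // qbinom0 expr0 !mulr1.
by rewrite addrCA -big_split; congr (_ + _); apply: eq_bigr => k _; rewrite mulrDr mulrA.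
Qed.

Lemma qbinom_sumS_rev (g : nat -> R) m :
  \sum_(0 <= i < m.+2) g i * qbinom m.+1 i =
  \sum_(0 <= k < m.+1) (g k.+1 * x ^+ (m - k) + g k) * qbinom m k.
Proof.
under [RHS]eq_bigr do rewrite mulrDl.
rewrite big_split /=.
have -> : \sum_(0 <= k < m.+1) g k * qbinom m k = \sum_(0 <= k < m.+2) g k * qbinom m k.
  by rewrite [RHS]big_nat_recr //= qbinom_small // mulr0 addr0.
rewrite big_nat_recl // [X in _ = _ + X]big_nat_recl // !qbinom0 addrCA -big_split.
congr (_ + _); apply: eq_bigr => k _ /=; rewrite -qbinomSS qbinomSS_rev; ring.
Qed.

Lemma qbinom_sumSS (f : nat -> R) m :
  \sum_(0 <= i < m.+3) f i * qbinom m.+2 i =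
  \sum_(0 <= k < m.+1)
     (f k.+2 * x ^+ (m - k) + f k.+1 * (1 + x ^+ k.+1) + f k * x ^+ (2 * k)) * qbinom m k.
Proof.
rewrite qbinom_sumS; under eq_bigr do rewrite mulrDl.
rewrite big_split /= qbinom_sumS_rev (qbinom_sumS (fun j => f j * x ^+ j)) -big_split /=.
apply: eq_bigr => k _; rewrite -mulrDl mul2n -addnn exprD; congr (_ * _); ring.
Qed.

Lemma gauss_qbinom_sum N :
  \sum_(0 <= i < (2 * N).+1) (-1) ^+ (i + N) * x ^+ sqdist i N * qbinom (2 * N) i
  = qpoch_odd N.
Proof.
elim: N => [|N IHN]; first by rewrite big_nat1 /qpoch_odd big_ord0 /= !mul1r.
rewrite qpoch_oddS -IHN mulr_suml mulnS add2n qbinom_sumSS.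
apply: eq_big_nat => k /andP[_ ltk].
have exp2 : (sqdist k.+2 N.+1 + (2 * N - k) = sqdist k N + k.+1)%N.
  by rewrite /sqdist !expnS expn0 !muln1; nia.
have exp1 : sqdist k.+1 N.+1 = sqdist k N by rewrite /sqdist; congr (_ ^ _)%N; lia.
have exp0 : (sqdist k N.+1 + 2 * k = sqdist k N + (2 * N).+1)%N.
  by rewrite /sqdist !expnS expn0 !muln1; nia.
have signSl j : (-1) ^+ (j.+1 + N) = - (-1) ^+ (j + N) :> R by rewrite addSn exprS mulN1r.
have signSr j : (-1) ^+ (j + N.+1) = - (-1) ^+ (j + N) :> R by rewrite addnS exprS mulN1r.
rewrite !signSr !signSl -!mulrA -!exprD exp2 exp1 exp0 !exprD; ring.
Qed.

Lemma theta_sqdist N :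
  \sum_(0 <= i < (2 * N).+1) (-1) ^+ (i + N) * x ^+ sqdist i N = theta N.
Proof.
have sign j a : (-1) ^+ (j + a.*2) = (-1) ^+ j :> R.
  by rewrite -signr_odd oddD odd_double addbF signr_odd.
pose S := \sum_(1 <= j < N.+1) (-1) ^+ j * x ^+ (j ^ 2).
have below : \sum_(0 <= i < N) (-1) ^+ (i + N) * x ^+ sqdist i N = S.
  rewrite big_nat_rev /S big_add1 /=; apply: eq_big_nat => j /andP[_ ltjN].
  rewrite add0n /sqdist (_ : N - j.+1 + N = j.+1 + (N - j.+1).*2)%N ?sign; last lia.
  by congr (_ * x ^+ (_ ^ 2)); lia.
have above : \sum_(N.+1 <= i < (2 * N).+1) (-1) ^+ (i + N) * x ^+ sqdist i N = S.
  rewrite -add1n big_addn (_ : (2 * N).+1 - N = N.+1)%N; last lia.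
  apply: eq_big_nat => j /andP[j_gt0 lejN].
  rewrite /sqdist (_ : j + N + N = j + N.*2)%N ?sign; last lia.
  by congr (_ * x ^+ (_ ^ 2)); lia.
rewrite (big_cat_nat (n := N)) //=; last lia.
rewrite [X in _ + X]big_ltn; last lia.
rewrite below above /sqdist subrr addnn -(add0n N.*2) sign expr0 mul1r /theta -/S mulr2n.
by rewrite (_ : (`|0| ^ 2 = 0)%N) // expr0 addrCA.
Qed.

End GaussianBinomial.

Lemma exprN_odd (R : nzRingType) (x : R) i : (- x) ^+ (2 * i).+1 = - x ^+ (2 * i).+1.
Proof. by rewrite exprNn -signr_odd /= oddM andFb expr1 mulN1r. Qed.

Lemma qpoch_odd_sqr (R : comNzRingType) (x : R) K :
  qpoch_odd (x ^+ 2) K = qpoch_odd x K * qpoch_odd (- x) K.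
Proof.
rewrite /qpoch_odd -big_split /=; apply: eq_bigr => i _.
by rewrite exprN_odd -exprM mulnC exprM; ring.
Qed.

Lemma qpoch_double (R : comNzRingType) (x : R) K :
  qpoch x (2 * K) = qpoch_odd x K * qpoch (x ^+ 2) K.
Proof.
elim: K => [|K IHK]; first by rewrite muln0 !qpoch0 qpoch_odd0 mulr1.
by rewrite mulnS add2n !qpochS IHK qpoch_oddS -exprM mulnS add2n; ring.
Qed.

Section Truncation.
Variables (R : comNzRingType) (x : {poly R}).
Hypothesis x_eq0 : x = 0 %[modX 1].

Definition qpoch_inv (M : nat) : {poly R} := \prod_(i < M) \sum_(j < M.+1) x ^+ (i.+1 * j).

Lemma subr_pow_eqmodX N k : (N <= k)%N -> 1 - x ^+ k = 1 %[modX N].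
Proof.
move=> leNk; rewrite -[X in _ = X %[modX N]]subr0.
exact: eqmodXD (eqmodX_refl _ _) (eqmodXN (eqmodX_pow0 x_eq0 leNk)).
Qed.

Lemma qpoch_eqmodX M k : (M <= k)%N -> qpoch x k = qpoch x M %[modX M.+1].
Proof.
move=> leMk; apply: (eqmodX_prod_trunc (F := fun i => 1 - x ^+ i.+1)) => // i /andP[leMi _].
exact: subr_pow_eqmodX.
Qed.

Lemma qpoch_odd_eqmodX M k : (M <= k)%N -> qpoch_odd x k = qpoch_odd x M %[modX M.+1].
Proof.
move=> leMk; apply: (eqmodX_prod_trunc (F := fun i => 1 - x ^+ (2 * i).+1)) => // i /andP[leMi _].
by apply: subr_pow_eqmodX; lia.
Qed.

Lemma qpoch_invP M : qpoch_inv M * qpoch x M = 1 %[modX M.+1].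
Proof.
rewrite /qpoch_inv /qpoch -big_split /=; apply: eqmodX_prod1 => i _.
under eq_bigr do rewrite exprM.
rewrite mulrC -[1 - _]opprB mulNr -subrX1 opprB -exprM.
by apply: subr_pow_eqmodX; nia.
Qed.

Lemma eqmodX_qpoch_inv M a b :
  a = b * qpoch x M %[modX M.+1] -> a * qpoch_inv M = b %[modX M.+1].
Proof.
move=> ab; apply: eqmodX_trans (eqmodXM ab (eqmodX_refl _ (qpoch_inv M))) _.
rewrite -mulrA [qpoch x M * _]mulrC -[X in _ = X %[modX _]]mulr1.
exact: eqmodXM (eqmodX_refl _ _) (qpoch_invP M).
Qed.

Lemma qbinom_eqmodX M m k : (M <= k)%N -> (k + M <= m)%N ->
  qbinom x m k * qpoch x M = 1 %[modX M.+1].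
Proof.
move=> leMk lekMm; apply: (eqmodX_mulIr (qpoch_invP M)); rewrite mul1r.
apply: (@eqmodX_trans _ _ _ (qbinom x m k * qpoch x k * qpoch x (m - k))).
  by apply: eqmodXM; [apply: eqmodXM (eqmodX_refl _ _) _ |];
     apply: eqmodX_sym; apply: qpoch_eqmodX; lia.
by rewrite qbinom_qpoch; [apply: qpoch_eqmodX | ]; lia.
Qed.

(* Modulo X^(M+1) only the terms with (i - N)^2 <= M survive; for them
   M <= i <= 2N - M, so their q-binomial is an inverse of (x;x)_M. *)
Lemma theta_eqmodX M N : (2 * M <= N)%N ->
  theta x N = qpoch_odd x N * qpoch x M %[modX M.+1].
Proof.
move=> le2MN; rewrite -theta_sqdist -gauss_qbinom_sum mulr_suml.
apply: eqmodX_sum => i _; rewrite -!mulrA.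
apply: eqmodXM (eqmodX_refl _ _) _.
case: (leqP (sqdist i N) M) => [small | large].
  rewrite -[X in X = _ %[modX _]]mulr1; apply: eqmodXM (eqmodX_refl _ _) _.
  by apply: eqmodX_sym; apply: qbinom_eqmodX; move: small; rewrite /sqdist; nia.
have xD0 c : x ^+ sqdist i N * c = 0 %[modX M.+1].
  by rewrite -(mul0r c); apply: eqmodXM (eqmodX_pow0 x_eq0 large) (eqmodX_refl _ _).
by rewrite -[X in X = _ %[modX _]]mulr1; apply: eqmodX_trans (xD0 _) (eqmodX_sym (xD0 _)).
Qed.

End Truncation.

Lemma coef_Msign (R : nzRingType) n (r : {poly R}) i :
  ((-1) ^+ n * r)`_i = (-1) ^+ n * r`_i.
Proof.
elim: n => [|n IHn]; first by rewrite !expr0 !mul1r.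
by rewrite !exprS !mulN1r !mulNr coefN IHn.
Qed.

Lemma coef_comp_polyN (R : comNzRingType) (r : {poly R}) i :
  (r \Po (- 'X))`_i = (-1) ^+ i * r`_i.
Proof.
rewrite coef_comp_poly; under eq_bigr do rewrite exprNn coef_Msign coefXn mulrA.
case: (ltnP i (size r)) => [ltir | leri].
  rewrite (bigD1 (Ordinal ltir)) //= eqxx mulr1 mulrC big1 ?addr0 // => j neji.
  by move: neji; rewrite -val_eqE /= eq_sym => /negbTE ->; rewrite mulr0.
by rewrite nth_default // mulr0 big1 // => j _; rewrite gtn_eqF ?mulr0 // (leq_trans _ leri).
Qed.

Lemma sumr_indicator (R : nzSemiRingType) (T : finType) (P : pred T) :
  \sum_(t : T) (P t)%:R = #|[set t | P t]|%:R :> R.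
Proof.
rewrite (eq_bigr (fun t => if P t then 1 else 0)) => [|t _]; last by case: (P t).
by rewrite -big_mkcond sumr_const cardsE.
Qed.

Lemma prodr_indicator (R : comNzSemiRingType) (T : finType) (P : pred T) :
  \prod_(t : T) (P t)%:R = [forall t, P t]%:R :> R.
Proof.
case: forallP => [allP | notallP]; first by rewrite big1 // => t _; rewrite allP.
have [t /negbTE Pt] : exists t, ~~ P t.
  by apply/existsP; rewrite -negb_forall; apply/forallP.
by rewrite (bigD1 t) //= Pt mul0r.
Qed.

Section Partitions.

Local Notation partition_poly n := (qpoch_inv ('X : {poly int}) n).

Let X0 := polyX_eqmodX0 int.

Lemma coef_partition_poly n : (partition_poly n)`_n = (npart n)%:Z.
Proof.
rewrite /qpoch_inv bigA_distr_bigA coef_sum /npart -natz -sumr_indicator.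
by apply: eq_bigr => f _; rewrite prodrXr coefXn eq_sym.
Qed.

Lemma coef_partition_poly_le n t : (t <= n)%N -> (partition_poly n)`_t = (npart t)%:Z.
Proof.
move=> letn; rewrite -coef_partition_poly; apply: (@coef_eqmodX _ t.+1) => //.
apply: (eqmodX_mulIr (qpoch_invP X0 t)).
apply: eqmodX_trans _ (eqmodX_sym (qpoch_invP X0 t)).
apply: eqmodX_trans (eqmodXM (eqmodX_refl _ _) (eqmodX_sym (qpoch_eqmodX X0 letn))) _.
exact: eqmodX_le (qpoch_invP X0 n).
Qed.

Lemma p_neg z : z < 0 -> p z = 0.
Proof. by case: z. Qed.

Lemma p_subn n k : p (n%:Z - k%:Z) = ('X^k * partition_poly n)`_n.
Proof.
rewrite coefXnM; case: ltnP => [ltnk | lekn]; first by rewrite p_neg //; lia.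
by rewrite subzn // coef_partition_poly_le ?leq_subr.
Qed.

Definition odd_distinct_poly n : {poly int} :=
  \prod_(i < n) (1 + (odd i.+1)%:R * 'X^(i.+1)).

Lemma coef_odd_distinct_poly n : (odd_distinct_poly n)`_n = (nqq n)%:Z.
Proof.
have -> : odd_distinct_poly n = \prod_(i < n) \sum_(b : bool)
    (if b then (odd i.+1)%:R * 'X^(i.+1) else 1 : {poly int}).
  by apply: eq_bigr => i _; rewrite big_bool /= addrC.
rewrite bigA_distr_bigA coef_sum /nqq -natz -sumr_indicator; apply: eq_bigr => f _.
have -> : \prod_(i < n) (if f i then (odd i.+1)%:R * 'X^(i.+1) else 1 : {poly int}) =
    \prod_(i < n) ((f i ==> odd i.+1)%:R * 'X^(i.+1 * f i)).
  by apply: eq_bigr => i _; case: (f i); rewrite ?muln1 ?muln0 ?expr0 ?mulr1.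
rewrite big_split /= prodr_indicator prodrXr mulr_natl coefMn coefXn eq_sym.
by case: [forall _, _]; case: (_ == _).
Qed.

Lemma odd_distinct_poly_double K : odd_distinct_poly (2 * K) = qpoch_odd (- 'X) K.
Proof.
elim: K => [|K IHK]; first by rewrite /odd_distinct_poly big_ord0 qpoch_odd0.
rewrite mulnS add2n /odd_distinct_poly !big_ord_recr -/(odd_distinct_poly _) IHK /=.
by rewrite qpoch_oddS exprN_odd opprK mul2n odd_double mul0r addr0 mulr1 mul1r -mul2n.
Qed.

Lemma coef_qpoch_odd_NX n : (qpoch_odd (- 'X) (2 * n))`_n = (nqq n)%:Z.
Proof.
rewrite -odd_distinct_poly_double -coef_odd_distinct_poly; apply: (@coef_eqmodX _ n.+1) => //.
apply: (eqmodX_prod_trunc (F := fun i => 1 + (odd i.+1)%:R * 'X^(i.+1))); first lia.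
move=> i /andP[leni _]; rewrite -[X in _ = X %[modX _]]addr0 -(mulr0 (odd i.+1)%:R).
exact: eqmodXD (eqmodX_refl _ _) (eqmodXM (eqmodX_refl _ _) (eqmodX_pow0 X0 _)).
Qed.

Lemma coef_qpoch_odd_X n : (qpoch_odd ('X : {poly int}) (2 * n))`_n = (-1) ^+ n * (nqq n)%:Z.
Proof.
rewrite -coef_qpoch_odd_NX -coef_comp_polyN /qpoch_odd rmorph_prod.
apply/(congr1 (fun q : {poly int} => q`_n))/eq_bigr => i _ /=.
by rewrite rmorphB rmorph1 rmorphXn /= raddfN /= comp_polyX opprK.
Qed.

Lemma theta_X_eqmodX n :
  theta 'X (2 * n) * partition_poly n = qpoch_odd 'X (2 * n) %[modX n.+1].
Proof. exact/(eqmodX_qpoch_inv X0)/(theta_eqmodX X0). Qed.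

(* (X^2;X^4) (X^2;X^2) = (X;X^2) (-X;X^2) (X^2;X^2) = (-X;X^2) (X;X) *)
Lemma theta_X2_eqmodX n :
  theta ('X^2) (2 * n) * partition_poly n = qpoch_odd (- 'X) (2 * n) %[modX n.+1].
Proof.
apply: (eqmodX_qpoch_inv X0).
apply: eqmodX_trans (theta_eqmodX (eqmodX_pow0 X0 (isT : 1 <= 2)%N) (leqnn _)) _.
rewrite qpoch_odd_sqr.
apply: (@eqmodX_trans _ _ _ (qpoch_odd (- 'X) (2 * n) * qpoch 'X (2 * n))); last first.
  by apply: eqmodXM (eqmodX_refl _ _) (qpoch_eqmodX X0 _); lia.
rewrite qpoch_double [qpoch_odd 'X _ * _]mulrC -mulrA.
by apply: eqmodXM (eqmodX_refl _ _) (eqmodXM (qpoch_odd_eqmodX X0 _) (eqmodX_refl _ _)); lia.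
Qed.

Lemma coef_theta_partition d n : (0 < d)%N ->
  (theta ('X^d) (2 * n) * partition_poly n)`_n =
  p n + (\sum_(1 <= j < n.+1) (-1) ^+ j * p (n%:Z - (d * j ^ 2)%N%:Z)) *+ 2.
Proof.
move=> d_gt0; rewrite /theta mulrDl mul1r coefD coef_partition_poly mulrnAl coefMn.
congr (_ + _ *+ 2); rewrite mulr_suml coef_sum (big_cat_nat (n := n.+1)) //=; last lia.
rewrite [X in _ + X]big1_seq ?addr0 => [|j /andP[_]]; last first.
  rewrite mem_index_iota => /andP[ltnj _].
  by rewrite -mulrA coef_Msign -exprM coefXnM ifT ?mulr0 //; nia.
by apply: eq_big_nat => j _; rewrite -mulrA coef_Msign -exprM p_subn.
Qed.

Lemma partition_theta_X (n : nat) :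
  p n + (\sum_(1 <= j < n.+1) (-1) ^+ j * p (n%:Z - (j ^ 2)%N%:Z)) *+ 2
  = (-1) ^+ n * (nqq n)%:Z.
Proof.
rewrite -coef_qpoch_odd_X -(coef_eqmodX (theta_X_eqmodX n) (ltnSn n)).
rewrite -[X in theta X]expr1 coef_theta_partition //.
by under [in RHS]eq_bigr do rewrite mul1n.
Qed.

Lemma partition_theta_X2 (n : nat) :
  p n + (\sum_(1 <= j < n.+1) (-1) ^+ j * p (n%:Z - (2 * j ^ 2)%N%:Z)) *+ 2
  = (nqq n)%:Z.
Proof.
by rewrite -coef_qpoch_odd_NX -(coef_eqmodX (theta_X2_eqmodX n) (ltnSn n)) coef_theta_partition.
Qed.

End Partitions.

Theorem theorem1 (n : int) :
  p n + \sum_(1 <= j < `|n|%N.+1) (-1) ^+ j * (p (n - (j ^ 2)%N%:Z) + p (n - (2 * j ^ 2)%N%:Z))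
  = (if odd `|n|%N then 0 else qq n).
Proof.
case: n => [n|n]; last first.
  rewrite big1 => [|j _]; first by rewrite addr0; case: ifP.
  by rewrite !p_neg ?addr0 ?mulr0 //; lia.
under eq_bigr do rewrite mulrDr.
rewrite big_split [absz _]/= /qq.
have := partition_theta_X n; have := partition_theta_X2 n.
move: (p n) (\sum_(1 <= j < n.+1) (-1) ^+ j * p (n%:Z - (j ^ 2)%N%:Z))
  (\sum_(1 <= j < n.+1) (-1) ^+ j * p (n%:Z - (2 * j ^ 2)%N%:Z)) => a S1 S2.
by rewrite /= -signr_odd; case: (odd n); rewrite ?expr0 ?expr1 ?mul1r ?mulN1r; lia.
Qed.
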